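(* Consider a sequence of total systems indexed by the size $N$ (the system S is fixed and the bath grows). For each $N$, the total Hamiltonian $H=H^{(N)}$ on $\mathcal{H}_{\mathrm{S}}\otimes\mathcal{H}_{\mathrm{B}}^{(N)}$ (finite-dimensional) has non-degenerate spectrum with eigenpairs $(E_j,|E_j\rangle)$, and the initial state is a product $\rho_{\mathrm{S}}(0)\otimes\rho_{\mathrm{B}}(0)$ (depending on $N$). Fix an energy density $u$ and widths $\Delta=\Delta_N>0$ with $\Delta_N=\mathcal{O}(N^\alpha)$ for some $0\le\alpha<1$, and let $M_{uN,\Delta}:=\{j:|E_j-uN|\le\Delta\}$ (assumed nonempty) and $\rho^{\mathrm{mc}}:=\frac{1}{|M_{uN,\Delta}|}\sum_{j\in M_{uN,\Delta}}|E_j\rangle\langle E_j|$. Assume: (i) (strong ETH) for every $\epsilon>0$, for all sufficiently large $N$, $\mathcal{D}_{\mathrm{S}}(|E_j\rangle\langle E_j|,\rho^{\mathrm{mc}})<\epsilon$ for every $j\in M_{uN,\Delta}$; (ii) (initial energy distribution) with $P_{\mathrm{out}}:=\sum_{j\notin M_{uN,\Delta}}|E_j\rangle\langle E_j|$, for every $\epsilon>0$, $\mathrm{Tr}[P_{\mathrm{out}}\,\rho_{\mathrm{S}}(0)\otimes\rho_{\mathrm{B}}(0)]<\epsilon$ for all sufficiently large $N$. Then for every $\epsilon>0$, $\mathcal{D}_{\mathrm{S}}(\omega,\rho^{\mathrm{mc}})<\epsilon$ for all sufficiently large $N$, where $\omega$ is the diagonal ensemble of $\rho_{\mathrm{S}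}(0)\otimes\rho_{\mathrm{B}}(0)$.
   Context: The diagonal ensemble of an initial state $\rho(0)$ is $\omega:=\lim_{\tau\to\infty}\frac1\tau\int_0^\tau e^{-iHt}\rho(0)e^{iHt}\,dt$; for non-degenerate $H$ this equals $\sum_j|E_j\rangle\langle E_j|\rho(0)|E_j\rangle\langle E_j|$. For density operators $\rho,\tau$ on $\mathcal{H}_{\mathrm{S}}\otimes\mathcal{H}_{\mathrm{B}}$, the local trace distance is $\mathcal{D}_{\mathrm{S}}(\rho,\tau):=\frac12\mathrm{Tr}\bigl|\mathrm{Tr}_{\mathrm{B}}\rho-\mathrm{Tr}_{\mathrm{B}}\tau\bigr|$. *)

From HB Require Import structures.
From mathcomp Require Import all_boot all_order all_algebra.
From mathcomp Require Import all_classical all_reals.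
From mathcomp Require Import exp.
From mathcomp Require Export complex mxtens.
Set Implicit Arguments. Unset Strict Implicit. Unset Printing Implicit Defensive.
Import Order.TTheory GRing.Theory Num.Theory.
Local Open Scope ring_scope.
Local Open Scope complex_scope.

Section QDefs.
Variable R : realType.
Local Notation C := R[i].

Definition adjmx {m n} (A : 'M[C]_(m, n)) : 'M[C]_(n, m) := (map_mx Num.conj A)^T.

Definition is_hermitian {n} (A : 'M[C]_n) : Prop := adjmx A = A.

Definition is_psd {n} (A : 'M[C]_n) : Prop :=
  is_hermitian A /\ forall x : 'cV[C]_n, 0 <= (adjmx x *m A *m x) 0 0.

Definition is_density {n} (A : 'M[C]_n) : Prop := is_psd A /\ \tr A = 1.

Definition ketbra {n} (v : 'cV[C]_n) : 'M[C]_n := v *m adjmx v.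

(* partial trace over the second (bath) factor of C^dS (x) C^dB,
   with the Kronecker ordering of tensmx *)
Definition ptraceB {dS dB} (A : 'M[C]_(dS * dB)) : 'M[C]_dS :=
  \matrix_(i, k) \sum_(b < dB) A (mxtens_index (i, b)) (mxtens_index (k, b)).

Definition absmx {n} (A : 'M[C]_n) : 'M[C]_n :=
  xget 0 [set S : 'M[C]_n | is_psd S /\ S *m S = adjmx A *m A].

(* trace norm Tr|A| (real part taken only to land in R; the trace of a is_psd
   matrix is real) *)
Definition trnorm {n} (A : 'M[C]_n) : R := complex.Re (\tr (absmx A)).

Definition DS {dS dB} (rho tau : 'M[C]_(dS * dB)) : R :=
  2^-1 * trnorm (ptraceB rho - ptraceB tau).

(* diagonal ensemble for non-degenerate H with eigenbasis v *)
Definition diag_ens {n} (v : 'I_n -> 'cV[C]_n) (rho : 'M[C]_n) : 'M[C]_n :=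
  \sum_(j < n) ketbra (v j) *m rho *m ketbra (v j).

Definition shell {n} (E : 'I_n -> R) (e Delta : R) : {set 'I_n} :=
  [set j | `|E j - e| <= Delta].

Definition rho_mc {n} (v : 'I_n -> 'cV[C]_n) (M : {set 'I_n}) : 'M[C]_n :=
  (#|M|%:R)^-1 *: \sum_(j in M) ketbra (v j).

Definition Pout {n} (v : 'I_n -> 'cV[C]_n) (M : {set 'I_n}) : 'M[C]_n :=
  \sum_(j in ~: M) ketbra (v j).

End QDefs.

(* The diagonal ensemble is the mixture [\sum_j p_j |E_j><E_j|] with populations
   [p_j = <E_j|rho|E_j>] summing to one, so linearity of the partial trace and
   convexity of the trace norm give
   [D_S(omega, rho_mc) <= \sum_j p_j D_S(|E_j><E_j|, rho_mc)].
   In the energy shell each term is small by strong ETH; outside it each term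
   is at most 1 and the total weight is [Tr(P_out rho)], small by assumption
   (ii). Convexity of the trace norm follows from its variational form
   [Tr|X| = min {\sum_b |x_b| |y_b| : X = \sum_b x_b y_b^dagger}], whose lower
   bound comes from a polar decomposition [|X| = U^dagger X] with [U U^dagger]
   a projection. *)

From HB Require Import structures.
From mathcomp Require Import all_boot all_order all_algebra.
From mathcomp Require Import all_classical all_reals.
From mathcomp Require Import exp.
From mathcomp Require Import complex mxtens sesquilinear spectral lra.
Import Order.TTheory GRing.Theory Num.Theory.
Local Open Scope ring_scope.
Set Implicit Arguments. Unset Strict Implicit. Unset Printing Implicit Defensive.

Section Adjoint.
Variable R : realType.
Local Notation C := R[i].

Lemma adjmxE m n (A : 'M[C]_(m, n)) i j : adjmx A i j = (A j i)^*.
Proof. by rewrite !mxE. Qed.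

Lemma adjmx_trmxC m n (A : 'M[C]_(m, n)) : adjmx A = (A ^t Num.conj)%sesqui.
Proof. exact: map_trmx. Qed.

Lemma adjmxK m n (A : 'M[C]_(m, n)) : adjmx (adjmx A) = A.
Proof. by apply/matrixP=> i j; rewrite !adjmxE conjCK. Qed.

Lemma adjmxM m n p (A : 'M[C]_(m, n)) (B : 'M[C]_(n, p)) :
  adjmx (A *m B) = adjmx B *m adjmx A.
Proof. by rewrite /adjmx map_mxM trmx_mul. Qed.

Lemma adjmxB m n (A B : 'M[C]_(m, n)) : adjmx (A - B) = adjmx A - adjmx B.
Proof. by rewrite /adjmx map_mxB linearB. Qed.

Lemma adjmxZ m n (c : C) (A : 'M[C]_(m, n)) : adjmx (c *: A) = c^* *: adjmx A.
Proof. by apply/matrixP=> i j; rewrite !mxE rmorphM. Qed.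

Lemma adjmx1 n : adjmx (1%:M : 'M[C]_n) = 1%:M.
Proof. by rewrite /adjmx map_mx1 trmx1. Qed.

Lemma adjmx_diag n (d : 'rV[C]_n) :
  adjmx (diag_mx d) = diag_mx (map_mx Num.conj d).
Proof.
apply/matrixP=> i j; rewrite adjmxE !mxE eq_sym.
by case: eqP => [->|]; rewrite ?mulr1n ?mulr0n ?rmorph0.
Qed.

Lemma adjmx_tens m n p q (A : 'M[C]_(m, n)) (B : 'M[C]_(p, q)) :
  adjmx (A *t B) = adjmx A *t adjmx B.
Proof. by apply/matrixP=> i j; rewrite !mxE rmorphM. Qed.

Lemma adjmx_mulmx_selfE n (y : 'cV[C]_n) :
  (adjmx y *m y) 0 0 = \sum_k `|y k 0| ^+ 2.
Proof. by rewrite mxE; apply: eq_bigr => k _; rewrite !mxE normCKC. Qed.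

Lemma adjmx_mulmx_self_ge0 n (y : 'cV[C]_n) : 0 <= (adjmx y *m y) 0 0.
Proof. by rewrite adjmx_mulmx_selfE sumr_ge0 // => k _; rewrite exprn_ge0. Qed.

End Adjoint.

Section PositiveSemidefinite.
Variable R : realType.
Local Notation C := R[i].

Lemma quad_diag_mxE n (d : 'rV[C]_n) (y : 'cV[C]_n) :
  (adjmx y *m diag_mx d *m y) 0 0 = \sum_k d 0 k * `|y k 0| ^+ 2.
Proof.
rewrite mul_mx_diag !mxE; apply: eq_bigr => k _; rewrite !mxE normCKC.
by rewrite mulrAC mulrC.
Qed.

Lemma psd_diag_conj n (W : 'M[C]_n) (d : 'rV[C]_n) : (forall k, 0 <= d 0 k) ->
  is_psd (W *m diag_mx d *m adjmx W).
Proof.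
move=> d_ge0; split.
  rewrite /is_hermitian !adjmxM adjmxK adjmx_diag mulmxA.
  congr (_ *m diag_mx _ *m _).
  by apply/matrixP=> i j; rewrite mxE (ord1 i) geC0_conj.
move=> x; rewrite !mulmxA -(mulmxA _ (adjmx W)).
have -> : adjmx x *m W = adjmx (adjmx W *m x) by rewrite adjmxM adjmxK.
rewrite quad_diag_mxE sumr_ge0 // => k _.
by rewrite mulr_ge0 // exprn_ge0.
Qed.

Lemma psd_unitary_diag n (S : 'M[C]_n) : is_psd S ->
  exists (W : 'M[C]_n) (g : 'rV[C]_n),
    [/\ adjmx W *m W = 1%:M, W *m adjmx W = 1%:M, (forall k, 0 <= g 0 k) &
        S = W *m diag_mx g *m adjmx W].
Proof.
move=> [hermS psdS].
have /unitarymxP V_unitary := spectral_unitarymx S.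
rewrite -adjmx_trmxC in V_unitary.
set V := spectralmx S in V_unitary *.
have SE : S = adjmx V *m diag_mx (spectral_diag S) *m V.
  rewrite adjmx_trmxC -invmx_unitary ?spectral_unitarymx //.
  apply/orthomx_spectralP/hermitian_normalmx/is_hermitianmxP.
  by rewrite expr0 scale1r -adjmx_trmxC.
set g := spectral_diag S in SE *.
exists (adjmx V), g; rewrite adjmxK; split => //.
  exact: mulmx1C.
move=> k; have := psdS (adjmx V *m delta_mx k 0).
rewrite adjmxM adjmxK SE !mulmxA -(mulmxA _ V (adjmx V)) V_unitary mulmx1.
rewrite -(mulmxA _ V (adjmx V)) V_unitary mulmx1 quad_diag_mxE.
rewrite (bigD1 k) //= big1 => [|j /negPf jk]; last first.
  by rewrite mxE jk normr0 expr0n mulr0.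
by rewrite mxE !eqxx normr1 expr1n mulr1 addr0.
Qed.

Lemma psd_mulmx_adjmx m n (B : 'M[C]_(m, n)) : is_psd (B *m adjmx B).
Proof.
split; first by rewrite /is_hermitian adjmxM adjmxK.
move=> x; rewrite mulmxA -mulmxA.
have -> : adjmx x *m B = adjmx (adjmx B *m x) by rewrite adjmxM adjmxK.
exact: adjmx_mulmx_self_ge0.
Qed.

Lemma psd_sqrt n (A : 'M[C]_n) : is_psd A -> exists S, is_psd S /\ S *m S = A.
Proof.
move=> /psd_unitary_diag [W [g [WW _ g_ge0 ->]]].
have sqrt_ge0 k : 0 <= (\row_j sqrtC (g 0 j)) 0 k by rewrite mxE sqrtC_ge0.
exists (W *m diag_mx (\row_j sqrtC (g 0 j)) *m adjmx W); split.
  exact: psd_diag_conj.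
rewrite !mulmxA -(mulmxA _ (adjmx W) W) WW mulmx1 -(mulmxA W) mulmx_diag.
congr (_ *m diag_mx _ *m _); apply/matrixP=> i j; rewrite !mxE (ord1 i).
by rewrite -expr2 sqrtCK.
Qed.

Lemma psd_mxtrace_ge0 n (A : 'M[C]_n) : is_psd A -> 0 <= \tr A.
Proof.
move=> /psd_unitary_diag [W [g [WW _ g_ge0 ->]]].
by rewrite mxtrace_mulC mulmxA WW mul1mx mxtrace_diag sumr_ge0.
Qed.

Lemma absmx_spec n (X : 'M[C]_n) :
  is_psd (absmx X) /\ absmx X *m absmx X = adjmx X *m X.
Proof.
have := psd_mulmx_adjmx (adjmx X); rewrite adjmxK => /psd_sqrt S_ex.
exact: (@xgetPex _ 0 [set S | is_psd S /\ S *m S = adjmx X *m X]).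
Qed.

Lemma psd_pinv n (S : 'M[C]_n) : is_psd S ->
  exists P, [/\ adjmx P = P, P *m (S *m S) = S & S *m (P *m P) = P].
Proof.
move=> /psd_unitary_diag [W [g [WW _ g_ge0 ->]]].
(* [gi] inverts [g] on its support and vanishes elsewhere, as [0^-1 = 0]. *)
pose gi := \row_k (g 0 k)^-1.
have gi_ge0 k : 0 <= gi 0 k by rewrite mxE invr_ge0.
have conjM A B : W *m A *m adjmx W *m (W *m B *m adjmx W) = W *m (A *m B) *m adjmx W.
  by rewrite !mulmxA -(mulmxA _ (adjmx W) W) WW mulmx1.
exists (W *m diag_mx gi *m adjmx W); split.
- exact: (psd_diag_conj W gi_ge0).1.
- rewrite !conjM !mulmx_diag; congr (_ *m diag_mx _ *m _); apply/rowP => k.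
  rewrite !mxE; have [->|gk0] := eqVneq (g 0 k) 0; first by rewrite !mulr0.
  by rewrite mulrA mulVf // mul1r.
- rewrite !conjM !mulmx_diag; congr (_ *m diag_mx _ *m _); apply/rowP => k.
  rewrite !mxE; have [->|gk0] := eqVneq (g 0 k) 0; first by rewrite invr0 !mul0r.
  by rewrite mulrA mulfV // mul1r.
Qed.

Lemma proj_quad_le n (Q : 'M[C]_n) (x : 'cV[C]_n) :
  Q *m Q = Q -> adjmx Q = Q ->
  (adjmx x *m Q *m x) 0 0 <= (adjmx x *m x) 0 0.
Proof.
move=> QQ hermQ; rewrite -subr_ge0.
have -> : (adjmx x *m x) 0 0 - (adjmx x *m Q *m x) 0 0 =
          (adjmx ((1%:M - Q) *m x) *m ((1%:M - Q) *m x)) 0 0.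
  have idem : (1%:M - Q) *m (1%:M - Q) = 1%:M - Q.
    by rewrite mulmxBl mul1mx mulmxBr mulmx1 QQ subrr subr0.
  rewrite adjmxM adjmxB adjmx1 hermQ !mulmxA -(mulmxA (adjmx x) (1%:M - Q)) idem.
  by rewrite mulmxBr mulmx1 mulmxBl [RHS]mxE; congr (_ + _); rewrite !mxE.
exact: adjmx_mulmx_self_ge0.
Qed.

Lemma absmx_polar n (X : 'M[C]_n) :
  exists2 U : 'M[C]_n, adjmx U *m X = absmx X &
    U *m adjmx U *m (U *m adjmx U) = U *m adjmx U.
Proof.
have [S_psd SS] := absmx_spec X.
have [P [hermP PSS SPP]] := psd_pinv S_psd.
exists (X *m P); rewrite adjmxM hermP; first by rewrite -mulmxA -SS PSS.
rewrite !mulmxA -(mulmxA _ (adjmx X) X) -SS -(mulmxA (X *m P) P) PSS.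
by rewrite -(mulmxA _ P P) -(mulmxA (X *m P)) SPP.
Qed.

End PositiveSemidefinite.

Section TraceNorm.
Variable R : realType.
Local Notation C := R[i].
Local Open Scope complex_scope.

Definition vnorm n (x : 'cV[C]_n) : C := sqrtC ((adjmx x *m x) 0 0).

Lemma vnorm_ge0 n (x : 'cV[C]_n) : 0 <= vnorm x.
Proof. by rewrite sqrtC_ge0 adjmx_mulmx_self_ge0. Qed.

Lemma vnormZ n (c : C) (x : 'cV[C]_n) : vnorm (c *: x) = `|c| * vnorm x.
Proof.
rewrite /vnorm adjmxZ -scalemxAl -scalemxAr scalerA mxE -normCKC.
by rewrite sqrtCM ?nnegrE ?exprn_ge0 ?adjmx_mulmx_self_ge0 // sqrCK.
Qed.

Lemma normC_adjmx_mulmx_le n (y z : 'cV[C]_n) :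
  `|(adjmx y *m z) 0 0| <= vnorm y * vnorm z.
Proof.
have dotE (a b : 'cV[C]_n) :
    (a^T *m (b^T ^t Num.conj)%sesqui) 0 0 = (adjmx b *m a) 0 0.
  by rewrite !mxE; apply: eq_bigr => k _; rewrite !mxE mulrC.
have := (CauchySchwarz_sqrt (@dotmx _ n) z^T y^T).1.
by rewrite /= !dotmxE !dotE mulrC.
Qed.

Lemma vnorm_adjmx_le n (U : 'M[C]_n) (z : 'cV[C]_n) :
  U *m adjmx U *m (U *m adjmx U) = U *m adjmx U ->
  vnorm (adjmx U *m z) <= vnorm z.
Proof.
move=> proj; rewrite /vnorm ler_sqrtC ?nnegrE ?adjmx_mulmx_self_ge0 //.
rewrite adjmxM adjmxK mulmxA -(mulmxA (adjmx z) U).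
by apply: proj_quad_le; rewrite // adjmxM adjmxK.
Qed.

Lemma trace_absmx_ge0 n (X : 'M[C]_n) : 0 <= \tr (absmx X).
Proof. exact: psd_mxtrace_ge0 (absmx_spec X).1. Qed.

Lemma trace_absmx_le_sum n (I : finType) (x y : I -> 'cV[C]_n) (X : 'M[C]_n) :
  X = \sum_b x b *m adjmx (y b) ->
  \tr (absmx X) <= \sum_b vnorm (x b) * vnorm (y b).
Proof.
move=> XE; have [U UX proj] := absmx_polar X.
rewrite -(ger0_norm (trace_absmx_ge0 X)) -UX XE mulmx_sumr linear_sum /=.
apply: (le_trans (ler_norm_sum _ _ _)); apply: ler_sum => b _.
rewrite mulmxA mxtrace_mulC trace_mx11 mulrC.
apply: (le_trans (normC_adjmx_mulmx_le _ _)).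
by apply: ler_wpM2l; [exact: vnorm_ge0 | exact: vnorm_adjmx_le].
Qed.

Lemma adjmx_col_mulmx n (W A : 'M[C]_n) l :
  (adjmx (col l W) *m A *m col l W) 0 0 = (adjmx W *m A *m W) l l.
Proof.
rewrite !mxE; apply: eq_bigr => k _; rewrite !mxE; congr (_ * _).
by apply: eq_bigr => i _; rewrite !mxE.
Qed.

Lemma sum_col_mulmx_adjmx n (W : 'M[C]_n) :
  \sum_l col l W *m adjmx (col l W) = W *m adjmx W.
Proof.
apply/matrixP => i j; rewrite summxE !mxE; apply: eq_bigr => l _.
by rewrite !mxE big_ord1 !mxE.
Qed.

(* Equality case of [trace_absmx_le_sum]: the trace norm is the least cost of
   a rank-one decomposition, which makes it subadditive. *)
Lemma trace_absmx_decomp n (Y : 'M[C]_n) :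
  exists x y : 'I_n -> 'cV[C]_n, Y = \sum_l x l *m adjmx (y l) /\
    \sum_l vnorm (x l) * vnorm (y l) = \tr (absmx Y).
Proof.
have [S_psd SS] := absmx_spec Y.
have [W [g [WW WW' g_ge0 SE]]] := psd_unitary_diag S_psd.
exists (fun l => Y *m col l W), (fun l => col l W); split.
  under eq_bigr do rewrite -mulmxA.
  by rewrite -mulmx_sumr sum_col_mulmx_adjmx WW' mulmx1.
rewrite SE mxtrace_mulC mulmxA WW mul1mx mxtrace_diag; apply: eq_bigr => l _.
have -> : vnorm (col l W) = 1.
  by rewrite /vnorm -(mulmx1 (adjmx _)) adjmx_col_mulmx mulmx1 WW mxE eqxx sqrtC1.
rewrite mulr1 /vnorm adjmxM mulmxA -(mulmxA _ (adjmx Y)) -SS.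
rewrite adjmx_col_mulmx SE !mulmxA WW mul1mx -(mulmxA _ (adjmx W) W) WW mulmx1.
rewrite -(mulmxA _ (adjmx W) W) WW mulmx1 mulmx_diag !mxE eqxx mulr1n.
by rewrite -expr2 sqrCK.
Qed.

Lemma trace_absmx_comb n (J : finType) (c : J -> C) (Y : J -> 'M[C]_n) :
  \tr (absmx (\sum_j c j *: Y j)) <= \sum_j `|c j| * \tr (absmx (Y j)).
Proof.
have [x /boolp.choice [y decomp]] :=
  boolp.choice (fun j => trace_absmx_decomp (Y j)).
have -> : \sum_j `|c j| * \tr (absmx (Y j)) =
    \sum_(p : J * 'I_n) vnorm (c p.1 *: x p.1 p.2) * vnorm (y p.1 p.2).
  rewrite -(pair_bigA _ (fun j l => vnorm (c j *: x j l) * vnorm (y j l))).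
  apply: eq_bigr => j _; rewrite -(decomp j).2 mulr_sumr.
  by apply: eq_bigr => l _; rewrite vnormZ mulrA.
apply: trace_absmx_le_sum.
rewrite -(pair_bigA _ (fun j l => c j *: x j l *m adjmx (y j l))).
apply: eq_bigr => j _; rewrite (decomp j).1 scaler_sumr.
by apply: eq_bigr => l _; rewrite scalemxAl.
Qed.

Lemma trace_absmxE n (X : 'M[C]_n) : \tr (absmx X) = (trnorm X)%:C.
Proof. by rewrite /trnorm RRe_real // ger0_real // trace_absmx_ge0. Qed.

Lemma trnorm_convex n (J : finType) (p : J -> R) (Y : J -> 'M[C]_n) :
  (forall j, 0 <= p j) ->
  trnorm (\sum_j (p j)%:C *: Y j) <= \sum_j p j * trnorm (Y j).
Proof.
move=> p_ge0; rewrite -lecR -trace_absmxE rmorph_sum.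
apply: (le_trans (trace_absmx_comb _ _)); apply: ler_sum => j _.
by rewrite ger0_norm ?ler0c // trace_absmxE rmorphM.
Qed.

Lemma trnormB_le n (A B : 'M[C]_n) : trnorm (A - B) <= trnorm A + trnorm B.
Proof.
have := trace_absmx_comb (fun b : bool => if b then 1 else -1)
                         (fun b => if b then A else B).
rewrite !big_bool /= scale1r scaleN1r normrN normr1 !mul1r.
by rewrite !trace_absmxE -rmorphD lecR.
Qed.

End TraceNorm.

Section PartialTrace.
Variable R : realType.
Local Notation C := R[i].

Lemma sum_mxtens_index m n (F : 'I_(m * n) -> C) :
  \sum_k F k = \sum_i \sum_b F (mxtens_index (i, b)).
Proof.
rewrite (pair_bigA _ (fun i b => F (mxtens_index (i, b)))) /=.
rewrite (reindex (@mxtens_index m n)) /=; last first.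
  by exists (@mxtens_unindex m n) => x _; rewrite ?mxtens_indexK ?mxtens_unindexK.
by apply: eq_bigr => -[i b].
Qed.

Lemma ptraceB_sum dS dB (I : finType) (F : I -> 'M[C]_(dS * dB)) :
  ptraceB (\sum_i F i) = \sum_i ptraceB (F i).
Proof.
apply/matrixP => i k; rewrite !summxE !mxE.
under eq_bigr do rewrite summxE.
by rewrite exchange_big; apply: eq_bigr => j _; rewrite mxE.
Qed.

Lemma ptraceBZ dS dB (c : C) (A : 'M[C]_(dS * dB)) :
  ptraceB (c *: A) = c *: ptraceB A.
Proof.
apply/matrixP => i k; rewrite !mxE mulr_sumr; apply: eq_bigr => b _.
by rewrite mxE.
Qed.

Lemma trnorm_ptraceB_ketbra_le1 dS dB (w : 'cV[C]_(dS * dB)) :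
  (adjmx w *m w) 0 0 = 1 -> trnorm (ptraceB (ketbra w)) <= 1.
Proof.
move=> w_unit; rewrite -lecR rmorph1 -trace_absmxE.
pose s b : 'cV[C]_dS := \col_i w (mxtens_index (i, b)) 0.
apply: (le_trans (trace_absmx_le_sum (x := s) (y := s) _)).
  apply/matrixP => i k; rewrite summxE !mxE; apply: eq_bigr => b _.
  by rewrite !mxE !big_ord1 !mxE.
rewrite -w_unit adjmx_mulmx_selfE sum_mxtens_index exchange_big /=.
apply: ler_sum => b _; rewrite /vnorm -expr2 sqrtCK adjmx_mulmx_selfE.
by apply: ler_sum => i _; rewrite mxE.
Qed.

Lemma mxtrace_tens m n (A : 'M[C]_m) (B : 'M[C]_n) : \tr (A *t B) = \tr A * \tr B.
Proof.
rewrite /mxtrace sum_mxtens_index mulr_suml; apply: eq_bigr => i _.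
by rewrite mulr_sumr; apply: eq_bigr => b _; rewrite tensmxE.
Qed.

Lemma density_tens m n (A : 'M[C]_m) (B : 'M[C]_n) :
  is_density A -> is_density B -> is_density (A *t B).
Proof.
move=> [A_psd trA] [B_psd trB].
split; last by rewrite mxtrace_tens trA trB mulr1.
have [SA [[hermSA _] <-]] := psd_sqrt A_psd.
have [SB [[hermSB _] <-]] := psd_sqrt B_psd.
rewrite -{2}hermSA -{2}hermSB -tensmx_mul -adjmx_tens.
exact: psd_mulmx_adjmx.
Qed.

End PartialTrace.

Lemma convex_comb_split_le (R : realFieldType) (I : finType) (A : {set I})
    (p d : I -> R) (e : R) :
  (forall j, 0 <= p j) -> \sum_j p j = 1 -> 0 <= e ->
  (forall j, d j <= 1) -> (forall j, j \in A -> d j <= e) ->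
  \sum_j p j * d j <= e + \sum_(j in ~: A) p j.
Proof.
move=> p_ge0 sum_p e_ge0 d_le1 d_le_e.
rewrite (bigID (mem A)) /= [X in _ <= _ + X](eq_bigl (fun j => j \notin A));
  last by move=> j; rewrite !inE.
apply: lerD.
  apply: (@le_trans _ _ (\sum_(j in A) p j * e)).
    by apply: ler_sum => j jA; rewrite ler_wpM2l ?d_le_e.
  rewrite -mulr_suml ler_piMl // -sum_p [X in _ <= X](bigID (mem A)) /=.
  by rewrite lerDl sumr_ge0.
by apply: ler_sum => j _; rewrite ler_piMr.
Qed.

Section DiagonalEnsemble.
Variable R : realType.
Local Notation C := R[i].
Local Open Scope complex_scope.

Lemma mxtrace_ketbra_mulmx n (w : 'cV[C]_n) (rho : 'M[C]_n) :
  \tr (ketbra w *m rho) = (adjmx w *m rho *m w) 0 0.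
Proof. by rewrite /ketbra -mulmxA mxtrace_mulC trace_mx11. Qed.

Lemma sum_ketbra_orthonormal n (v : 'I_n -> 'cV[C]_n) :
  (forall j k, (adjmx (v j) *m v k) 0 0 = (j == k)%:R) ->
  \sum_j ketbra (v j) = 1%:M.
Proof.
move=> v_orthonormal; pose V := \matrix_(i, j) v j i 0.
have VV : adjmx V *m V = 1%:M.
  apply/matrixP => j k; rewrite [RHS]mxE -v_orthonormal !mxE.
  by apply: eq_bigr => i _; rewrite !mxE.
rewrite -(mulmx1C VV); apply/matrixP => i k; rewrite summxE !mxE.
by apply: eq_bigr => j _; rewrite !mxE big_ord1 !mxE.
Qed.

Definition population n (v : 'I_n -> 'cV[C]_n) (rho : 'M[C]_n) j : R :=
  complex.Re ((adjmx (v j) *m rho *m v j) 0 0).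

Lemma populationE n (v : 'I_n -> 'cV[C]_n) (rho : 'M[C]_n) j : is_psd rho ->
  (adjmx (v j) *m rho *m v j) 0 0 = (population v rho j)%:C.
Proof. by move=> [_ rho_psd]; rewrite /population RRe_real // ger0_real. Qed.

Lemma population_ge0 n (v : 'I_n -> 'cV[C]_n) (rho : 'M[C]_n) j : is_psd rho ->
  0 <= population v rho j.
Proof. by move=> rho_psd; rewrite -ler0c -populationE //; exact: rho_psd.2. Qed.

Lemma sum_population n (v : 'I_n -> 'cV[C]_n) (rho : 'M[C]_n) :
  (forall j k, (adjmx (v j) *m v k) 0 0 = (j == k)%:R) -> is_density rho ->
  \sum_j population v rho j = 1.
Proof.
move=> v_orthonormal [rho_psd tr_rho]; apply: (@complexI R).
rewrite rmorph_sum rmorph1 -tr_rho -[in RHS](mul1mx rho).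
rewrite -(sum_ketbra_orthonormal v_orthonormal) mulmx_suml.
rewrite (big_morph _ (@mxtraceD _ _) (mxtrace0 _ _)).
by apply: eq_bigr => j _; rewrite mxtrace_ketbra_mulmx populationE.
Qed.

Lemma mxtrace_Pout n (v : 'I_n -> 'cV[C]_n) (M : {set 'I_n}) (rho : 'M[C]_n) :
  is_psd rho -> \tr (Pout v M *m rho) = (\sum_(j in ~: M) population v rho j)%:C.
Proof.
move=> rho_psd; rewrite /Pout mulmx_suml rmorph_sum.
rewrite (big_morph _ (@mxtraceD _ _) (mxtrace0 _ _)).
by apply: eq_bigr => j _; rewrite mxtrace_ketbra_mulmx populationE.
Qed.

Lemma diag_ensE n (v : 'I_n -> 'cV[C]_n) (rho : 'M[C]_n) : is_psd rho ->
  diag_ens v rho = \sum_j (population v rho j)%:C *: ketbra (v j).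
Proof.
move=> rho_psd; apply: eq_bigr => j _.
rewrite -populationE // /ketbra !mulmxA -(mulmxA (v j) (adjmx (v j)) rho).
rewrite -(mulmxA (v j) (adjmx (v j) *m rho) (v j)).
by rewrite {1}[adjmx (v j) *m rho *m v j]mx11_scalar mul_mx_scalar -scalemxAl.
Qed.

Lemma rho_mcE n (v : 'I_n -> 'cV[C]_n) (M : {set 'I_n}) :
  rho_mc v M = \sum_j ((j \in M)%:R / #|M|%:R)%:C *: ketbra (v j).
Proof.
rewrite /rho_mc scaler_sumr big_mkcond /=; apply: eq_bigr => j _.
case: (j \in M); last by rewrite mul0r scale0r.
by rewrite mul1r fmorphV rmorph_nat.
Qed.

Section Bipartite.
Variables (dS dB : nat) (v : 'I_(dS * dB) -> 'cV[C]_(dS * dB)).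
Hypothesis v_orthonormal : forall j k, (adjmx (v j) *m v k) 0 0 = (j == k)%:R.

Lemma trnorm_ptraceB_rho_mc_le1 (M : {set 'I_(dS * dB)}) :
  (0 < #|M|)%N -> trnorm (ptraceB (rho_mc v M)) <= 1.
Proof.
move=> M_gt0; rewrite rho_mcE ptraceB_sum.
under eq_bigr do rewrite ptraceBZ.
apply: (le_trans (trnorm_convex _ _)) => [j|]; first by rewrite divr_ge0.
apply: (@le_trans _ _ (\sum_j (j \in M)%:R / #|M|%:R)).
  apply: ler_sum => j _; apply: ler_piMr; first by rewrite divr_ge0.
  by apply: trnorm_ptraceB_ketbra_le1; rewrite v_orthonormal eqxx.
rewrite -mulr_suml -natr_sum -big_mkcondr sum1_card /= mulfV //.
by rewrite pnatr_eq0 -lt0n.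
Qed.

Lemma DS_ketbra_rho_mc_le1 (M : {set 'I_(dS * dB)}) j :
  (0 < #|M|)%N -> DS (ketbra (v j)) (rho_mc v M) <= 1.
Proof.
move=> M_gt0; have := trnormB_le (ptraceB (ketbra (v j))) (ptraceB (rho_mc v M)).
have := trnorm_ptraceB_rho_mc_le1 M_gt0.
have : trnorm (ptraceB (ketbra (v j))) <= 1.
  by apply: trnorm_ptraceB_ketbra_le1; rewrite v_orthonormal eqxx.
rewrite /DS; lra.
Qed.

Lemma DS_diag_ens_le (rho sigma : 'M[C]_(dS * dB)) : is_density rho ->
  DS (diag_ens v rho) sigma <=
    \sum_j population v rho j * DS (ketbra (v j)) sigma.
Proof.
move=> rho_density; have rho_psd := rho_density.1.
rewrite /DS; set p := population v rho; set sg := ptraceB sigma.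
have -> : ptraceB (diag_ens v rho) - sg =
          \sum_j (p j)%:C *: (ptraceB (ketbra (v j)) - sg).
  rewrite diag_ensE // ptraceB_sum.
  under [RHS]eq_bigr do rewrite scalerBr.
  rewrite sumrB -scaler_suml -rmorph_sum sum_population // rmorph1 scale1r.
  by under eq_bigr do rewrite ptraceBZ.
under [X in _ <= X]eq_bigr do rewrite mulrCA.
rewrite -mulr_sumr ler_wpM2l ?invr_ge0 ?ler0n //.
by apply: trnorm_convex => j; apply: population_ge0.
Qed.

Lemma DS_diag_ens_rho_mc_le (rho : 'M[C]_(dS * dB)) (M : {set 'I_(dS * dB)})
    (e : R) :
  is_density rho -> (0 < #|M|)%N -> 0 <= e ->
  (forall j, j \in M -> DS (ketbra (v j)) (rho_mc v M) <= e) ->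
  DS (diag_ens v rho) (rho_mc v M) <= e + \sum_(j in ~: M) population v rho j.
Proof.
move=> rho_density M_gt0 e_ge0 eth.
apply: (le_trans (DS_diag_ens_le _ rho_density)).
apply: convex_comb_split_le => // [j||j].
- exact: population_ge0 rho_density.1.
- exact: sum_population.
- exact: DS_ketbra_rho_mc_le1.
Qed.

End Bipartite.
End DiagonalEnsemble.

Local Open Scope complex_scope.
Unset Implicit Arguments.

Theorem lemma1 (R : realType) (dS : nat) (dB : nat -> nat)
  (H : forall N, 'M[R[i]]_(dS * dB N))
  (E : forall N, 'I_(dS * dB N) -> R)
  (v : forall N, 'I_(dS * dB N) -> 'cV[R[i]]_(dS * dB N))
  (rhoS : nat -> 'M[R[i]]_dS) (rhoB : forall N, 'M[R[i]]_(dB N))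
  (u alpha : R) (Delta : nat -> R) :
  (* H^(N) Hermitian, non-degenerate spectrum, orthonormal eigenbasis *)
  (forall N, is_hermitian (H N)) ->
  (forall N, injective (E N)) ->
  (forall N j k, (adjmx (v N j) *m v N k) 0 0 = (j == k)%:R) ->
  (forall N j, H N *m v N j = (E N j)%:C *: v N j) ->
  (* product initial state *)
  (forall N, is_density (rhoS N)) -> (forall N, is_density (rhoB N)) ->
  (* widths Delta_N > 0, Delta_N = O(N^alpha), 0 <= alpha < 1 *)
  (forall N, 0 < Delta N) -> 0 <= alpha < 1 ->
  (exists c : R, exists N0 : nat, forall N, (N0 <= N)%N ->
      Delta N <= c * (N%:R `^ alpha)) ->
  (* nonempty energy shell *)
  (forall N, 0 < #|shell (E N) (u * N%:R) (Delta N)|)%N ->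
  (* (i) strong ETH *)
  (forall eps : R, 0 < eps -> exists N0 : nat, forall N, (N0 <= N)%N ->
     forall j, j \in shell (E N) (u * N%:R) (Delta N) ->
       DS (ketbra (v N j)) (rho_mc (v N) (shell (E N) (u * N%:R) (Delta N)))
         < eps) ->
  (* (ii) initial energy distribution *)
  (forall eps : R, 0 < eps -> exists N0 : nat, forall N, (N0 <= N)%N ->
     \tr (Pout (v N) (shell (E N) (u * N%:R) (Delta N)) *m
          tensmx (rhoS N) (rhoB N)) < eps%:C) ->
  (* conclusion *)
  forall eps : R, 0 < eps -> exists N0 : nat, forall N, (N0 <= N)%N ->
    DS (diag_ens (v N) (tensmx (rhoS N) (rhoB N)))
       (rho_mc (v N) (shell (E N) (u * N%:R) (Delta N))) < eps.
Proof.
move=> _ _ v_orthonormal _ rhoS_density rhoB_density _ _ _ shell_gt0 eth out.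
move=> eps eps_gt0; have eps2_gt0 : 0 < eps / 2 by rewrite divr_gt0.
have [N1 ethN] := eth _ eps2_gt0.
have [N2 outN] := out _ eps2_gt0.
exists (maxn N1 N2) => N; rewrite geq_max => /andP [N1N N2N].
have rho_density := density_tens (rhoS_density N) (rhoB_density N).
have := DS_diag_ens_rho_mc_le (v_orthonormal N) rho_density (shell_gt0 N)
  (ltW eps2_gt0) (fun j jM => ltW (ethN N N1N j jM)).
move: (outN N N2N); rewrite mxtrace_Pout ?ltcR; [lra | exact: rho_density.1].
Qed.
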